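(* Let $G$ be a group and $\mathcal S$ a stable admissible family of subgroups of $G$. Then the monoid $\widehat G_{\mathcal S}$ is a group.
   Context: An admissible family of subgroups of $G$ is a family $\mathcal S$ closed under conjugation such that the intersection of any finitely many members contains a member. It is stable if for all $K\le H$ in $\mathcal S$ there is $L\in\mathcal S$ with $L\le K$ and $L$ normal in $H$. $\widehat G_{\mathcal S}$ is the set of functions $f$ assigning to each $H\in\mathcal S$ a right coset $f(H)\in H\backslash G$ such that $f(K)\subseteq f(H)$ whenever $K\subseteq H$ are in $\mathcal S$ (i.e. $\widehat G_{\mathcal S}=\varprojlim H\backslash G$). For $f\in\widehat G_{\mathcal S}$ and $H\in\mathcal S$, write $H^f:=x^{-1}Hx$ where $f(H)=Hx$ (independent of the choice of $x$). The product is $(f\cdot f')(H)=f(H)\,f'(H^f)$ (product of subsets of $G$), which is associative with identity $e(H)=H$, making $\widehat G_{\mathcal S}$ a monoid. *)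

From Stdlib Require Import List.

Record Grp := {
  carrier :> Type;
  gmul : carrier -> carrier -> carrier;
  gone : carrier;
  ginv : carrier -> carrier;
  gmulA : forall x y z, gmul x (gmul y z) = gmul (gmul x y) z;
  gmul1 : forall x, gmul gone x = x;
  gmulV : forall x, gmul (ginv x) x = gone
}.

Arguments gmul {g}.
Arguments gone {g}.
Arguments ginv {g}.

Section Defs.
Variable G : Grp.

Definition gset := G -> Prop.

Definition subset (A B : gset) : Prop := forall z, A z -> B z.

Definition is_subgroup (H : gset) : Prop :=
  H gone /\ (forall x y, H x -> H y -> H (gmul x y)) /\ (forall x, H x -> H (ginv x)).

Definition rcoset (H : gset) (x : G) : gset := fun z => H (gmul z (ginv x)).

(* conjugate x^{-1} H x :  y belongs to it iff x y x^{-1} belongs to H *)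
Definition conjg (H : gset) (x : G) : gset := fun y => H (gmul (gmul x y) (ginv x)).

Definition setmul (A B : gset) : gset :=
  fun z => exists a b, A a /\ B b /\ z = gmul a b.

Definition bigcap (l : list gset) : gset := fun z => forall H, In H l -> H z.

Definition admissible (S : gset -> Prop) : Prop :=
  (forall H, S H -> is_subgroup H) /\
  (forall H x, S H -> S (conjg H x)) /\
  (forall l : list gset, (forall H, In H l -> S H) ->
      exists L, S L /\ subset L (bigcap l)).

Definition normal_in (L H : gset) : Prop :=
  forall h y, H h -> L y -> L (gmul (gmul h y) (ginv h)).

Definition stable (S : gset -> Prop) : Prop :=
  forall K H, S K -> S H -> subset K H ->
    exists L, S L /\ subset L K /\ normal_in L H.

(* Elements of \hat G_S: functions on subgroups whose values on members of S
   are right cosets, compatible with inclusion. Only the values on S matter. *)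
Definition in_Ghat (S : gset -> Prop) (f : gset -> gset) : Prop :=
  (forall H, S H -> exists x, f H = rcoset H x) /\
  (forall K H, S K -> S H -> subset K H -> subset (f K) (f H)).

(* H^f := x^{-1} H x where f(H) = H x *)
Definition Hf (f : gset -> gset) (H : gset) : gset :=
  fun y => exists x, f H = rcoset H x /\ conjg H x y.

Definition ghat_mul (f f' : gset -> gset) : gset -> gset :=
  fun H => setmul (f H) (f' (Hf f H)).

(* identity e(H) = H; equality in \hat G_S is equality on all H in S *)
Definition ghat_eq (S : gset -> Prop) (f g : gset -> gset) : Prop :=
  forall H, S H -> f H = g H.

End Defs.

Arguments subset {G}.
Arguments is_subgroup {G}.
Arguments rcoset {G}.
Arguments conjg {G}.
Arguments setmul {G}.
Arguments admissible {G}.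
Arguments stable {G}.
Arguments in_Ghat {G}.
Arguments Hf {G}.
Arguments ghat_mul {G}.
Arguments ghat_eq {G}.

From Stdlib Require Import List FunctionalExtensionality PropExtensionality.

(* Given f with f(K) = K x, the natural candidate for the inverse is
   g(K) = K x'^{-1}, where x' is the representative of f at some H in S whose
   conjugate H^f = x'^{-1} H x' lies in K.  Such an H exists by stability: take
   M <= K /\ x K x^{-1} in S and L <= M in S normal in K; then f(L) = L m with
   m in K x, and normality of L in K gives L^f = x^{-1} L x <= K.  Any two
   admissible choices of H have a common lower bound in S, and compatibility
   of f along inclusions shows that K x'^{-1} does not depend on the choice.
   With this g, both products reduce to  H x . (x^{-1} H x) x^{-1} = H. *)

Section GroupLaws.
Variable G : Grp.
Local Infix "**" := (@gmul G) (at level 40, left associativity).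

Lemma gmulA_rev (a b c : G) : a ** b ** c = a ** (b ** c).
Proof. now rewrite gmulA. Qed.

Lemma gmulVr (x : G) : x ** ginv x = gone.
Proof.
  rewrite <- (gmul1 G (x ** ginv x)), <- (gmulV G (ginv x)) at 1.
  rewrite <- gmulA, (gmulA _ (ginv x) x (ginv x)), gmulV, gmul1.
  apply gmulV.
Qed.

Lemma gmul1r (x : G) : x ** gone = x.
Proof. now rewrite <- (gmulV G x), gmulA, gmulVr, gmul1. Qed.

Lemma gmulKV (a b : G) : ginv a ** (a ** b) = b.
Proof. now rewrite gmulA, gmulV, gmul1. Qed.

Lemma gmulK (a b : G) : a ** (ginv a ** b) = b.
Proof. now rewrite gmulA, gmulVr, gmul1. Qed.

Lemma ginvK (a : G) : ginv (ginv a) = a.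
Proof. now rewrite <- (gmul1r (ginv (ginv a))), <- (gmulV G a), gmulA, gmulV, gmul1. Qed.

Lemma ginvM (a b : G) : ginv (a ** b) = ginv b ** ginv a.
Proof.
  assert (hab : a ** b ** (ginv b ** ginv a) = gone)
    by now rewrite gmulA_rev, gmulK, gmulVr.
  now rewrite <- (gmul1r (ginv (a ** b))), <- hab, gmulA, gmulV, gmul1.
Qed.

Lemma ginv1 : ginv (@gone G) = gone.
Proof. rewrite <- (gmul1 G (ginv gone)). apply gmulVr. Qed.

End GroupLaws.

Ltac group_simpl :=
  repeat (rewrite ?ginvM, ?ginvK, ?ginv1, ?gmulA_rev, ?gmulKV, ?gmulK,
                  ?gmulV, ?gmulVr, ?gmul1, ?gmul1r);
  try reflexivity.

Lemma gset_ext (G : Grp) (A B : gset G) : (forall z, A z <-> B z) -> A = B.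
Proof.
  intro hAB. apply functional_extensionality. intro z.
  apply propositional_extensionality. apply hAB.
Qed.

Section Cosets.
Context {G : Grp}.
Local Infix "**" := (@gmul G) (at level 40, left associativity).
Context {H : gset G}.
Hypothesis sgH : is_subgroup H.

Lemma rcoset_refl (x : G) : rcoset H x x.
Proof. destruct sgH as [h1 _]. unfold rcoset. now rewrite gmulVr. Qed.

Lemma rcoset_eq (x y : G) : H (x ** ginv y) -> rcoset H x = rcoset H y.
Proof.
  destruct sgH as [_ [hmul hinv]]. intro hxy.
  apply gset_ext; intro z; unfold rcoset; split; intro hz.
  - replace (z ** ginv y) with ((z ** ginv x) ** (x ** ginv y))
      by group_simpl; auto.
  - replace (z ** ginv x) with ((z ** ginv y) ** ginv (x ** ginv y))
      by group_simpl; auto.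
Qed.

Lemma rcoset_inj (x y : G) : rcoset H x = rcoset H y -> H (x ** ginv y).
Proof. intro e. pose proof (rcoset_refl x) as hx. now rewrite e in hx. Qed.

Lemma conjg_eq (x y : G) : H (x ** ginv y) -> conjg H x = conjg H y.
Proof.
  destruct sgH as [_ [hmul hinv]]. intro hxy. set (h := x ** ginv y).
  apply gset_ext; intro z; unfold conjg; split; intro hz.
  - replace (y ** z ** ginv y) with (ginv h ** ((x ** z ** ginv x) ** h))
      by (unfold h; group_simpl); auto.
  - replace (x ** z ** ginv x) with (h ** ((y ** z ** ginv y) ** ginv h))
      by (unfold h; group_simpl); auto.
Qed.

Lemma Hf_rcoset (f : gset G -> gset G) (x : G) :
  f H = rcoset H x -> Hf f H = conjg H x.
Proof.
  intro e. apply gset_ext; intro y; unfold Hf; split.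
  - intros [x' [e' hy]]. rewrite e in e'.
    now rewrite (conjg_eq x x' (rcoset_inj x x' e')).
  - intro hy. now exists x.
Qed.

Lemma setmul_rcoset_conjg (x : G) :
  setmul (rcoset H x) (rcoset (conjg H x) (ginv x)) = H.
Proof.
  destruct sgH as [h1 [hmul _]].
  apply gset_ext; intro z; unfold setmul, rcoset, conjg; split.
  - intros [a [b [ha [hb ->]]]].
    replace (x ** (b ** ginv (ginv x)) ** ginv x) with (x ** b) in hb
      by group_simpl.
    replace (a ** b) with ((a ** ginv x) ** (x ** b)) by group_simpl; auto.
  - intro hz. exists (z ** x), (ginv x). repeat split.
    + now replace (z ** x ** ginv x) with z by group_simpl.
    + now replace (x ** (ginv x ** ginv (ginv x)) ** ginv x) with (@gone G)
        by group_simpl.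
    + group_simpl.
Qed.

End Cosets.

Section Inverse.
Context {G : Grp}.
Local Infix "**" := (@gmul G) (at level 40, left associativity).
Variable S : gset G -> Prop.
Hypothesis hadm : admissible S.
Variable f : gset G -> gset G.
Hypothesis hf : in_Ghat S f.

Lemma admissible_subgroup (H : gset G) : S H -> is_subgroup H.
Proof. destruct hadm as [hsub _]. auto. Qed.

Lemma admissible_lower_bound (H1 H2 : gset G) : S H1 -> S H2 ->
  exists L, S L /\ subset L H1 /\ subset L H2.
Proof.
  intros S1 S2. destruct hadm as [_ [_ hcap]].
  destruct (hcap (H1 :: H2 :: nil)) as [L [SL hL]].
  { intros H [<- | [<- | []]]; auto. }
  exists L. repeat split; auto; intros z hz; apply (hL z hz); simpl; auto.
Qed.

Lemma in_Ghat_rcoset_sub (H K : gset G) (x : G) : S H -> S K -> subset H K ->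
  f H = rcoset H x -> f K = rcoset K x.
Proof.
  intros SH SK sHK e. destruct hf as [hcos hmono].
  destruct (hcos K SK) as [w ew]. rewrite ew.
  assert (hx : rcoset K w x).
  { rewrite <- ew. apply (hmono H K SH SK sHK). rewrite e.
    exact (rcoset_refl (admissible_subgroup H SH) x). }
  symmetry. exact (rcoset_eq (admissible_subgroup K SK) x w hx).
Qed.

Definition conj_rep_sub (K H : gset G) (x : G) : Prop :=
  S H /\ f H = rcoset H x /\ subset (conjg H x) K.

Lemma conj_rep_sub_mono (K1 K2 H : gset G) (x : G) : subset K1 K2 ->
  conj_rep_sub K1 H x -> conj_rep_sub K2 H x.
Proof. intros s12 [SH [e c]]. split; [|split]; auto. intros z hz. auto. Qed.

Lemma conj_rep_sub_rcoset (K H : gset G) (x x' : G) : S K ->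
  conj_rep_sub K H x -> f H = rcoset H x' ->
  rcoset K (ginv x) = rcoset K (ginv x').
Proof.
  intros SK [SH [e hsub]] e'. apply (rcoset_eq (admissible_subgroup K SK)).
  rewrite ginvK. apply hsub. unfold conjg.
  destruct (admissible_subgroup H SH) as [_ [_ hinv]].
  rewrite e in e'.
  pose proof (hinv _ (rcoset_inj (admissible_subgroup H SH) x x' e')) as hH.
  now replace (x ** (ginv x ** x') ** ginv x) with (ginv (x ** ginv x'))
    by group_simpl.
Qed.

Lemma conj_rep_sub_unique (K H1 H2 : gset G) (x1 x2 : G) : S K ->
  conj_rep_sub K H1 x1 -> conj_rep_sub K H2 x2 ->
  rcoset K (ginv x1) = rcoset K (ginv x2).
Proof.
  intros SK c1 c2. pose proof c1 as [S1 _]. pose proof c2 as [S2 _].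
  destruct (admissible_lower_bound H1 H2 S1 S2) as [L [SL [sL1 sL2]]].
  destruct hf as [hcos _]. destruct (hcos L SL) as [y ey].
  rewrite (conj_rep_sub_rcoset K H1 x1 y SK c1
             (in_Ghat_rcoset_sub L H1 y SL S1 sL1 ey)).
  symmetry. exact (conj_rep_sub_rcoset K H2 x2 y SK c2
                     (in_Ghat_rcoset_sub L H2 y SL S2 sL2 ey)).
Qed.

Definition ghat_inv (K : gset G) : gset G :=
  fun z => exists H x, conj_rep_sub K H x /\ rcoset K (ginv x) z.

Lemma ghat_invE (K H : gset G) (x : G) : S K -> conj_rep_sub K H x ->
  ghat_inv K = rcoset K (ginv x).
Proof.
  intros SK c. apply gset_ext; intro z; split.
  - intros [H' [x' [c' hz]]]. now rewrite (conj_rep_sub_unique K H H' x x' SK c c').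
  - intro hz. now exists H, x.
Qed.

Lemma ghat_mulfV : ghat_eq S (ghat_mul f ghat_inv) (fun H => H).
Proof.
  intros H SH. destruct hadm as [_ [hconj _]]. destruct hf as [hcos _].
  destruct (hcos H SH) as [x e]. pose proof (admissible_subgroup H SH) as sgH.
  unfold ghat_mul. rewrite (Hf_rcoset sgH f x e).
  assert (c : conj_rep_sub (conjg H x) H x) by now split; [|split].
  rewrite (ghat_invE _ H x (hconj H x SH) c), e.
  exact (setmul_rcoset_conjg sgH x).
Qed.

Section Stable.
Hypothesis hstab : stable S.

Lemma conj_rep_sub_exists (K : gset G) : S K ->
  exists H x, conj_rep_sub K H x.
Proof.
  intros SK. destruct hadm as [_ [hconj _]]. destruct hf as [hcos _].
  destruct (hcos K SK) as [x ex].
  destruct (admissible_lower_bound K (conjg K (ginv x)) SK (hconj K _ SK))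
    as [M [SM [sMK sMKx]]].
  destruct (hstab M K SM SK sMK) as [L [SL [sLM nLK]]].
  destruct (hcos L SL) as [m em].
  exists L, m. repeat split; auto.
  (* m = k x with k in K, and L is normal in K, so m^{-1} L m = x^{-1} L x. *)
  assert (hk : K (m ** ginv x)).
  { apply (rcoset_inj (admissible_subgroup K SK)).
    rewrite <- ex. symmetry.
    exact (in_Ghat_rcoset_sub L K m SL SK (fun z hz => sMK z (sLM z hz)) em). }
  destruct (admissible_subgroup K SK) as [_ [_ hinvK]].
  intros z hz. unfold conjg in hz.
  assert (hLx : L (x ** z ** ginv x)).
  { replace (x ** z ** ginv x)
      with (ginv (m ** ginv x) ** (m ** z ** ginv m) ** ginv (ginv (m ** ginv x)))
      by group_simpl.
    apply nLK; auto. }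
  pose proof (sMKx _ (sLM _ hLx)) as hKz. unfold conjg in hKz.
  now replace (ginv x ** (x ** z ** ginv x) ** ginv (ginv x)) with z
    in hKz by group_simpl.
Qed.

Lemma ghat_inv_in_Ghat : in_Ghat S ghat_inv.
Proof.
  split.
  - intros K SK. destruct (conj_rep_sub_exists K SK) as [H [x c]].
    exists (ginv x). exact (ghat_invE K H x SK c).
  - intros K1 K2 S1 S2 s12. destruct (conj_rep_sub_exists K1 S1) as [H [x c]].
    rewrite (ghat_invE K1 H x S1 c),
            (ghat_invE K2 H x S2 (conj_rep_sub_mono K1 K2 H x s12 c)).
    intro z. apply s12.
Qed.

Lemma ghat_mulVf : ghat_eq S (ghat_mul ghat_inv f) (fun H => H).
Proof.
  intros K SK. destruct hadm as [_ [hconj _]].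
  destruct (conj_rep_sub_exists K SK) as [H [y c]].
  pose proof c as [SH [e hsub]]. pose proof (admissible_subgroup K SK) as sgK.
  unfold ghat_mul. rewrite (Hf_rcoset sgK ghat_inv (ginv y) (ghat_invE K H y SK c)).
  rewrite (ghat_invE K H y SK c).
  set (K' := conjg K (ginv y)).
  assert (sHK' : subset H K').
  { intros z hz. apply hsub. unfold K', conjg.
    now replace (y ** (ginv y ** z ** ginv (ginv y)) ** ginv y) with z
      by group_simpl. }
  rewrite (in_Ghat_rcoset_sub H K' y SH (hconj K _ SK) sHK' e).
  rewrite <- (ginvK G y) at 2.
  exact (setmul_rcoset_conjg sgK (ginv y)).
Qed.

End Stable.

End Inverse.

Theorem lemma6p2 (G : Grp) (S : gset G -> Prop)
  (hadm : admissible S) (hstab : stable S) :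
  forall f, in_Ghat S f ->
    exists g, in_Ghat S g /\
      ghat_eq S (ghat_mul f g) (fun H => H) /\
      ghat_eq S (ghat_mul g f) (fun H => H).
Proof.
  intros f hf. exists (ghat_inv S f). split; [|split].
  - exact (ghat_inv_in_Ghat S hadm f hf hstab).
  - exact (ghat_mulfV S hadm f hf).
  - exact (ghat_mulVf S hadm f hf hstab).
Qed.
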